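(* Let $k\ge1$. In base $2$, among all odd $k$-digit numbers $n$ (i.e. odd $n$ with $2^{k-1}\le n<2^k$), $d_2(n)$ has a unique maximum at $n=2^k-1$ (binary $11\ldots1$).
   Context: Base-$2$ lunar product: for $x=\sum_ix_i2^i$, $y=\sum_jy_j2^j$ with binary digits $x_i,y_j\in\{0,1\}$, $x\otimes y=\sum_n(\max_{i+j=n}\min(x_i,y_j))2^n$. For a positive integer $n$, $d_2(n)$ is the number of positive integers $m$ such that $m\otimes q=n$ for some integer $q$. *)

From mathcomp Require Import all_boot.
Set Implicit Arguments. Unset Strict Implicit. Unset Printing Implicit Defensive.

Definition bit2 (i x : nat) : bool := odd (x %/ 2 ^ i).

(* Base-2 lunar product: digit n = max_{i+j=n} min(x_i, y_j); for 0/1 digits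
   max = boolean or, min = boolean and.  All nonzero digit positions are
   < x + y, so summing over n < x + y covers every digit. *)
Definition lunar_mul2 (x y : nat) : nat :=
  \sum_(n < x + y) [exists i : 'I_n.+1, bit2 i x && bit2 (n - i) y] * 2 ^ n.

(* For n > 0 any such m, q satisfy m <= n and q <= n (since q <> 0 and
   m (x) q dominates m shifted by a set bit of q, and symmetrically), so the
   search ranges 'I_n.+1 lose nothing. *)
Definition d2 (n : nat) : nat :=
  #|[set m : 'I_n.+1 | (0 < m) && [exists q : 'I_n.+1, lunar_mul2 m q == n]]|.

From mathcomp Require Import all_boot zify.
Set Implicit Arguments. Unset Strict Implicit. Unset Printing Implicit Defensive.

(* A lunar divisor m of an odd n has its lowest bit set, and so does its
   cofactor q; hence the bits of m are bits of n, and if a is the top bit of m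
   then every bit of q lies below k - a.  Adding to m every position i <= a that
   is missing from n yields a lunar divisor of 2^k - 1 with cofactor
   2^(k-a) - 1, from which m is recovered as the bitwise "and" with n.  This
   injection misses the divisor 2^(h+1) - 1 for any position h < k missing from
   n, whose top bit h would have to be the top bit of m.  The argument only uses
   n < 2^k, not that n has exactly k digits. *)

Definition nat_of_bits (P : nat -> bool) (K : nat) : nat :=
  \sum_(i < K) P i * 2 ^ i.

Lemma bit20 x : bit2 0 x = odd x.
Proof. by rewrite /bit2 expn0 divn1. Qed.

Lemma bit2S i x : bit2 i.+1 x = bit2 i (x %/ 2).
Proof. by rewrite /bit2 expnS divnMA. Qed.

Lemma bit2_small i x : x < 2 ^ i -> bit2 i x = false.
Proof. by move=> lt_x; rewrite /bit2 divn_small. Qed.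

Lemma bit2_lt i x : bit2 i x -> i < x.
Proof.
apply: contraTT; rewrite -leqNgt => le_x_i.
by rewrite bit2_small // (leq_ltn_trans le_x_i (ltn_expl i (ltnSn 1))).
Qed.

Lemma eq_nat_of_bits P Q K :
  (forall i, i < K -> P i = Q i) -> nat_of_bits P K = nat_of_bits Q K.
Proof. by move=> eqPQ; apply: eq_bigr => i _; rewrite eqPQ. Qed.

Lemma nat_of_bitsS P K :
  nat_of_bits P K.+1 = P 0 + 2 * nat_of_bits (fun i => P i.+1) K.
Proof.
rewrite /nat_of_bits big_ord_recl /= expn0 muln1 big_distrr /=; congr (_ + _).
by apply: eq_bigr => i _; rewrite expnS mulnCA.
Qed.

Lemma bit2_nat_of_bits P K j : bit2 j (nat_of_bits P K) = P j && (j < K).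
Proof.
elim: K P j => [|K IHK] P [|j].
- by rewrite /nat_of_bits big_ord0 bit20 andbF.
- by rewrite /nat_of_bits big_ord0 /bit2 div0n andbF.
- by rewrite nat_of_bitsS bit20 oddD oddM addbF andbT; case: (P 0).
rewrite nat_of_bitsS bit2S addnC mulnC divnMDl // divn_small ?addn0 ?IHK //.
by case: (P 0).
Qed.

Lemma nat_of_bits_lt P K : nat_of_bits P K < 2 ^ K.
Proof.
elim: K P => [|K IHK] P; first by rewrite /nat_of_bits big_ord0.
rewrite nat_of_bitsS expnS; have := IHK (fun i => P i.+1).
have : P 0 <= 1 by case: (P 0).
lia.
Qed.

Lemma nat_of_bits_true K : nat_of_bits (fun=> true) K = 2 ^ K - 1.
Proof.
elim: K => [|K IHK]; first by rewrite /nat_of_bits big_ord0.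
by rewrite nat_of_bitsS IHK expnS; have := expn_gt0 2 K; lia.
Qed.

Lemma nat_of_bits_bit2 K x : x < 2 ^ K -> nat_of_bits (bit2^~ x) K = x.
Proof.
elim: K x => [|K IHK] x lt_x; first by rewrite /nat_of_bits big_ord0; lia.
rewrite nat_of_bitsS bit20 (@eq_nat_of_bits _ (bit2^~ (x %/ 2))) => [|i _].
  rewrite IHK; first by rewrite {3}(divn_eq x 2) modn2; lia.
  by rewrite ltn_divLR // -expnSr.
exact: bit2S.
Qed.

Lemma bit2_inj x y : (forall i, bit2 i x = bit2 i y) -> x = y.
Proof.
move=> eq_xy; have lt_x := ltn_expl (x + y) (ltnSn 1).
rewrite -[LHS](nat_of_bits_bit2 (leq_ltn_trans (leq_addr y x) lt_x)).
rewrite -[RHS](nat_of_bits_bit2 (leq_ltn_trans (leq_addl x y) lt_x)).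
exact: eq_nat_of_bits.
Qed.

Lemma bit2_ones i l : bit2 i (2 ^ l - 1) = (i < l).
Proof. by rewrite -nat_of_bits_true bit2_nat_of_bits. Qed.

Lemma bit2_exp_lt i x K : x < 2 ^ K -> bit2 i x -> i < K.
Proof.
move=> lt_x; apply: contraTT; rewrite -leqNgt => le_K_i.
by rewrite bit2_small // (leq_trans lt_x) ?leq_exp2l.
Qed.

Lemma exists_bit2_false x K :
  x < 2 ^ K -> x != 2 ^ K - 1 -> exists2 h, h < K & ~~ bit2 h x.
Proof.
move=> lt_x.
have [/forallP x_ones | /forallPn[h x_h]] := boolP [forall h : 'I_K, bit2 h x].
  rewrite -(nat_of_bits_bit2 lt_x) -nat_of_bits_true; case/eqP.
  by apply: eq_nat_of_bits => i lt_i; rewrite (x_ones (Ordinal lt_i)).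
by exists h.
Qed.

Lemma bit2_trunc_log m : 0 < m -> bit2 (trunc_log 2 m) m.
Proof.
move=> m_gt0; rewrite /bit2 (_ : m %/ _ = 1) //; apply/eqP; rewrite eqn_leq.
rewrite -ltnS ltn_divLR ?expn_gt0 // -expnS trunc_log_ltn //=.
by rewrite leq_divRL ?expn_gt0 // mul1n trunc_logP.
Qed.

Lemma bit2_leq_trunc_log j m : bit2 j m -> j <= trunc_log 2 m.
Proof.
apply: contraTT; rewrite -ltnNge => lt_log_j.
by rewrite bit2_small // (leq_trans (trunc_log_ltn m (ltnSn 1))) ?leq_exp2l.
Qed.

Lemma bit2_lunar_mul2P x y j :
  reflect (exists2 i, i <= j & bit2 i x && bit2 (j - i) y)
          (bit2 j (lunar_mul2 x y)).
Proof.
pose P n := [exists i : 'I_n.+1, bit2 i x && bit2 (n - i) y].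
rewrite (_ : lunar_mul2 x y = nat_of_bits P (x + y)) // bit2_nat_of_bits.
apply: (iffP andP) => [[/existsP[i xy_i] _] | [i le_ij /andP[x_i y_ji]]].
  by exists i; rewrite // -ltnS.
split; first by apply/existsP; exists (Ordinal (le_ij : i < j.+1)); rewrite /= x_i.
by have := bit2_lt x_i; have := bit2_lt y_ji; lia.
Qed.

Lemma bit2_lunar_mul2_add i j x y :
  bit2 i x -> bit2 j y -> bit2 (i + j) (lunar_mul2 x y).
Proof.
by move=> x_i y_j; apply/bit2_lunar_mul2P; exists i; rewrite ?leq_addr ?addKn ?x_i.
Qed.

Lemma bit2_lunar_mul2_0 x y : bit2 0 (lunar_mul2 x y) = bit2 0 x && bit2 0 y.
Proof.
apply/bit2_lunar_mul2P/idP => [[i] | xy_0]; last by exists 0.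
by rewrite leqn0 => /eqP->.
Qed.

Lemma lunar_mul2_ones a b : 0 < a -> 0 < b ->
  lunar_mul2 (2 ^ a - 1) (2 ^ b - 1) = 2 ^ (a + b).-1 - 1.
Proof.
move=> a_gt0 b_gt0; apply: bit2_inj => j; rewrite bit2_ones.
apply/bit2_lunar_mul2P/idP => [[i _] | lt_j]; first by rewrite !bit2_ones; lia.
by exists (minn j a.-1); rewrite ?geq_minl // !bit2_ones; lia.
Qed.

Definition lunar_dvd (m n : nat) : bool :=
  (0 < m) && [exists q : 'I_n.+1, lunar_mul2 m q == n].

Lemma d2E n : d2 n = #|[set m : 'I_n.+1 | lunar_dvd m n]|.
Proof. by []. Qed.

Lemma d2_lt_inj n N (f : nat -> nat) d :
    (forall m, lunar_dvd m n -> (f m <= N) && lunar_dvd (f m) N) ->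
    (forall m1 m2, lunar_dvd m1 n -> lunar_dvd m2 n -> f m1 = f m2 -> m1 = m2) ->
    d <= N -> lunar_dvd d N -> (forall m, lunar_dvd m n -> f m != d) ->
  d2 n < d2 N.
Proof.
move=> f_dvd f_inj le_dN d_dvd f_neq_d.
pose g (m : 'I_n.+1) : 'I_N.+1 := inord (f m).
have gE (m : 'I_n.+1) : lunar_dvd m n -> g m = f m :> nat.
  by case/f_dvd/andP => le_fmN _; rewrite inordK.
have g_inj : {in [set m : 'I_n.+1 | lunar_dvd m n] &, injective g}.
  move=> m1 m2; rewrite !inE => m1_dvd m2_dvd /(congr1 (@nat_of_ord _)).
  by rewrite !gE // => /(f_inj _ _ m1_dvd m2_dvd)/val_inj.
rewrite !d2E -(card_in_imset g_inj); apply/proper_card/properP; split.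
  apply/subsetP => _ /imsetP[m + ->]; rewrite !inE => m_dvd.
  by rewrite gE //; case/andP: (f_dvd _ m_dvd).
exists (inord d); first by rewrite inE inordK.
apply/imsetP => -[m]; rewrite inE => m_dvd /(congr1 (@nat_of_ord _)).
by rewrite /= gE // inordK // => /eqP; rewrite eq_sym (negbTE (f_neq_d _ m_dvd)).
Qed.

Lemma lunar_dvd_ones x b k :
    0 < x -> b <= k -> lunar_mul2 x (2 ^ b - 1) = 2 ^ k - 1 ->
  lunar_dvd x (2 ^ k - 1).
Proof.
move=> x_gt0 le_bk x_ones; rewrite /lunar_dvd x_gt0; apply/existsP.
by exists (inord (2 ^ b - 1)); rewrite inordK ?x_ones // ltnS leq_sub2r ?leq_exp2l.
Qed.

Section LunarFill.

Variables n k : nat.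
Hypotheses (n_odd : odd n) (n_lt : n < 2 ^ k).

Definition lunar_fill (m : nat) : nat :=
  nat_of_bits (fun i => bit2 i m || ~~ bit2 i n && (i <= trunc_log 2 m)) k.

Section LunarDivisor.

Variables m q : nat.
Hypothesis mq_n : lunar_mul2 m q = n.
Let a := trunc_log 2 m.

Lemma lunar_divisor_odd : bit2 0 m && bit2 0 q.
Proof. by rewrite -bit2_lunar_mul2_0 mq_n bit20. Qed.

Lemma bit2_lunar_divisor i : bit2 i m -> bit2 i n.
Proof.
case/andP: lunar_divisor_odd => _ q_0 m_i.
by rewrite -mq_n -[i]addn0; apply: bit2_lunar_mul2_add.
Qed.

Lemma bit2_lunar_divisor_top : bit2 a m.
Proof.
by case/andP: lunar_divisor_odd => /bit2_lt m_gt0 _; apply: bit2_trunc_log.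
Qed.

Lemma lunar_divisor_top_lt : a < k.
Proof. exact: bit2_exp_lt n_lt (bit2_lunar_divisor bit2_lunar_divisor_top). Qed.

Lemma lunar_cofactor_lt j : bit2 j q -> j < k - a.
Proof.
move=> q_j; have := bit2_lunar_mul2_add bit2_lunar_divisor_top q_j.
by rewrite mq_n => /(bit2_exp_lt n_lt); lia.
Qed.

Lemma bit2_lunar_fill i :
  bit2 i (lunar_fill m) = bit2 i m || ~~ bit2 i n && (i <= a).
Proof.
rewrite bit2_nat_of_bits; case: orP => //= -[/bit2_lunar_divisor | /andP[_]].
  by move/(bit2_exp_lt n_lt)->.
by have := lunar_divisor_top_lt; lia.
Qed.

Lemma bit2_lunar_divisor_fill i : bit2 i m = bit2 i (lunar_fill m) && bit2 i n.
Proof.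
rewrite bit2_lunar_fill; case m_i: (bit2 i m); first by rewrite bit2_lunar_divisor.
by case: (bit2 i n); rewrite ?andbF.
Qed.

Lemma lunar_fill_mul_ones :
  lunar_mul2 (lunar_fill m) (2 ^ (k - a) - 1) = 2 ^ k - 1.
Proof.
have lt_a_k := lunar_divisor_top_lt; have m_a := bit2_lunar_divisor_top.
apply: bit2_inj => j; rewrite bit2_ones.
apply/bit2_lunar_mul2P/idP => [[i _] | lt_j_k].
  rewrite bit2_ones bit2_lunar_fill => /andP[/orP[/bit2_leq_trunc_log | /andP[_]]];
  rewrite -/a; lia.
have [le_a_j | lt_j_a] := leqP a j.
  by exists a; rewrite // bit2_lunar_fill m_a bit2_ones; lia.
case fill_j: (bit2 j (lunar_fill m)).
  by exists j; rewrite // fill_j subnn bit2_ones subn_gt0.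
move: fill_j; rewrite bit2_lunar_fill (ltnW lt_j_a) andbT => /norP[_ /negbNE].
rewrite -{1}mq_n => /bit2_lunar_mul2P[i le_ij /andP[m_i q_ji]].
by exists i; rewrite // bit2_lunar_fill m_i bit2_ones lunar_cofactor_lt.
Qed.

Lemma lunar_fill_neq_ones h : ~~ bit2 h n -> lunar_fill m != 2 ^ h.+1 - 1.
Proof.
move=> n_h; apply: contraNneq n_h => fill_ones.
have fill_h : bit2 h (lunar_fill m) by rewrite fill_ones bit2_ones.
have le_a_h : a <= h.
  rewrite -ltnS -(bit2_ones _ h.+1) -fill_ones.
  by rewrite bit2_lunar_fill bit2_lunar_divisor_top.
move: fill_h; rewrite bit2_lunar_fill.
case/orP=> [/bit2_lunar_divisor // | /andP[_ le_h_a]].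
have -> : h = a by apply/eqP; rewrite eqn_leq le_h_a le_a_h.
exact: bit2_lunar_divisor bit2_lunar_divisor_top.
Qed.

End LunarDivisor.

Lemma lunar_fill_dvd m :
  lunar_dvd m n ->
  (lunar_fill m <= 2 ^ k - 1) && lunar_dvd (lunar_fill m) (2 ^ k - 1).
Proof.
case/andP => _ /existsP[q /eqP mq_n]; apply/andP; split.
  by rewrite leq_subRL ?expn_gt0 // add1n; apply: nat_of_bits_lt.
apply: (lunar_dvd_ones _ (leq_subr _ _) (lunar_fill_mul_ones mq_n)).
apply: (@bit2_lt 0); rewrite (bit2_lunar_fill mq_n).
by case/andP: (lunar_divisor_odd mq_n) => ->.
Qed.

Lemma lunar_fill_inj m1 m2 :
  lunar_dvd m1 n -> lunar_dvd m2 n -> lunar_fill m1 = lunar_fill m2 -> m1 = m2.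
Proof.
case/andP=> _ /existsP[q1 /eqP m1_n] /andP[_ /existsP[q2 /eqP m2_n]] fill_eq.
apply: bit2_inj => i.
by rewrite (bit2_lunar_divisor_fill m1_n) (bit2_lunar_divisor_fill m2_n) fill_eq.
Qed.

Lemma d2_lt_ones : n != 2 ^ k - 1 -> d2 n < d2 (2 ^ k - 1).
Proof.
move=> n_neq; have [h lt_hk n_h] := exists_bit2_false n_lt n_neq.
apply: (@d2_lt_inj _ _ lunar_fill (2 ^ h.+1 - 1)).
- exact: lunar_fill_dvd.
- exact: lunar_fill_inj.
- by rewrite leq_sub2r ?leq_exp2l.
- apply: (@lunar_dvd_ones _ (k - h) _ _ (leq_subr _ _)).
    by rewrite subn_gt0 -[1](expn0 2) ltn_exp2l.
  by rewrite lunar_mul2_ones ?subn_gt0 // addSn subnKC ?(ltnW lt_hk).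
- move=> m /andP[_ /existsP[q /eqP mq_n]].
  exact: (lunar_fill_neq_ones mq_n n_h).
Qed.

End LunarFill.

Theorem mainTheorem4 (k : nat) : 1 <= k ->
  [/\ odd (2 ^ k - 1), 2 ^ k.-1 <= 2 ^ k - 1 < 2 ^ k &
      forall n : nat, odd n -> 2 ^ k.-1 <= n < 2 ^ k -> n != 2 ^ k - 1 ->
        d2 n < d2 (2 ^ k - 1)].
Proof.
move=> k_gt0; have exp_k : 2 ^ k = 2 * 2 ^ k.-1 by rewrite -expnS prednK.
have exp_gt0 := expn_gt0 2 k.-1; split.
- by rewrite exp_k oddB ?oddM //; lia.
- by apply/andP; split; lia.
- by move=> n n_odd /andP[_ n_lt]; apply: d2_lt_ones.
Qed.
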